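(* Let $\Delta$ be a tight SID and $\phi$ a tight sentence over $\Delta$. For every model $(\alpha,m)$ of $\phi$ (i.e. $(\alpha,m)\models_\Delta\phi$), the architecture $\alpha$ is tight.
   Context: Signature $\Sigma=(\mathfrak C,\mathfrak I,\mathfrak P)$: component types $\mathfrak C$, interaction types $\mathfrak I$ with arities $\#(\mathsf I)$, pairwise disjoint port sets $\mathfrak P(\mathsf C)$, port tuples $\mathfrak P(\mathsf I)$ of length $\#(\mathsf I)$; $\langle\mathfrak P(\mathsf I)\rangle_k$ is its $k$-th port. An architecture $\alpha$ gives $\alpha(\mathsf C)\subseteq\mathbb U$, $\alpha(\mathsf I)\subseteq\mathbb U^{\#(\mathsf I)}$. CL formulas $\phi::=\mathsf{emp}\mid\mathsf C(x)\mid\mathsf C^q(x)\mid\mathsf I(x_1..x_k)\mid\mathsf A(x_1..x_n)\mid\phi*\phi\mid\exists x.\phi$; SID = finite set of rules $\mathsf A(x_1..x_n)\leftarrow\phi$ with $\mathrm{fv}(\phi)=\{x_1..x_n\}$; $(\alpha,m)\models^s_\Delta\phi$ is the least relation where atoms $\mathsf C(x)$/$\mathsf C^q(x)$ denote the single component $\mathsf C[s(x)]$ with marking $\{q[s(x)]\}$ (for some/the given state $q$), $\mathsf I(\vec x)$ the single interaction $\mathsf I[s(\vec x)]$ with empty marking, $\mathsf{emp}$ the empty configuration, predicate atoms unfold by rules, $*$ is union of configurations with disjoint component sets and disjoint interaction relations, and $\exists$ chooses a value. An architecture $\alpha$ is tight if for each $\langle u_1..u_k\rangle\in\alpha(\mathsf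 I)$ and each $k'\in[1,k]$, $u_{k'}\in\alpha(\mathsf C)$ for the unique $\mathsf C$ with $\langle\mathfrak P(\mathsf I)\rangle_{k'}\in\mathfrak P(\mathsf C)$. A profile $\lambda$ maps each predicate symbol $\mathsf A$ of nonzero arity to a tuple of component types of length $\#(\mathsf A)$. A formula $\phi$ is tight for $\lambda$ if for every interaction atom $\mathsf I(x_1..x_k)$ of $\phi$ and every $j\in[1,k]$, $\phi$ contains a component atom $\mathsf C^q(x_j)$ with $\langle\mathfrak P(\mathsf I)\rangle_j\in\mathfrak P(\mathsf C)$, or a predicate atom $\mathsf A(y_1..y_n)$ with $x_j=y_\ell$ and $\langle\mathfrak P(\mathsf I)\rangle_j\in\mathfrak P(\langle\lambda(\mathsf A)\rangle_\ell)$ for some $\ell$. A SID $\Delta$ is tight if there is a profile $\lambda_\Delta$ such that for each rule $\mathsf A(x_1..x_n)\leftarrow\phi$, $\phi$ is tight for $\lambda_\Delta$ and for each $j\in[1,n]$, $\phi$ contains a component atom $\mathsf C^q(x_j)$ with $\langle\lambda_\Delta(\mathsf A)\rangle_j=\mathsf C$, or a predicate atom $\mathsf B(y_1..y_r)$ with $x_j=y_\ell$ and $\langle\lambda_\Delta(\mathsf A)\rangle_j=\langle\lambda_\Delta(\mathsf B)\rangle_\ell$ for some $\ell$. A formula over a tight SID $\Delta$ is tight if it is tight for $\lambda_\Delta$. *)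

From Stdlib Require Import List Arith.
Import ListNotations.
Set Implicit Arguments.

Record Signature := {
  CType : Type;
  IType : Type;
  Port  : Type;
  State : Type;
  PSym  : Type;
  cports : CType -> Port -> Prop;
  iarity : IType -> nat;
  iports : IType -> list Port;
  parity : PSym -> nat;
  iports_len : forall I, length (iports I) = iarity I;
  cports_disj : forall C C' p, cports C p -> cports C' p -> C = C'
}.

Arguments cports {_}. Arguments iarity {_}. Arguments iports {_}. Arguments parity {_}.

Definition var := nat.

Section CL.
Variable S : Signature.

Inductive form : Type :=
| Emp : form
| CompA : CType S -> var -> form
| CompQ : CType S -> State S -> var -> form
| Inter : IType S -> list var -> form
| PredA : PSym S -> list var -> form
| Sep : form -> form -> form
| Ex : var -> form -> form.

Fixpoint fv (f : form) : list var :=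
  match f with
  | Emp => []
  | CompA _ x => [x]
  | CompQ _ _ x => [x]
  | Inter _ xs => xs
  | PredA _ xs => xs
  | Sep f g => fv f ++ fv g
  | Ex x f => filter (fun y => negb (Nat.eqb y x)) (fv f)
  end.

Fixpoint bv (f : form) : list var :=
  match f with
  | Sep f g => bv f ++ bv g
  | Ex x f => x :: bv f
  | _ => []
  end.

Fixpoint atoms (f : form) : list form :=
  match f with
  | Sep f g => atoms f ++ atoms g
  | Ex _ f => atoms f
  | a => [a]
  end.

Definition atom_in (a f : form) : Prop := In a (atoms f).

Fixpoint wf_arity (f : form) : Prop :=
  match f with
  | Inter i xs => length xs = iarity i
  | PredA A xs => length xs = parity A
  | Sep f g => wf_arity f /\ wf_arity g
  | Ex _ f => wf_arity f
  | _ => True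
  end.

Definition var_conv (f : form) : Prop :=
  NoDup (bv f) /\ forall x, In x (bv f) -> ~ In x (fv f).

Record rule := { rhead : PSym S; rparams : list var; rbody : form }.

Definition wf_rule (r : rule) : Prop :=
  length (rparams r) = parity (rhead r) /\ NoDup (rparams r) /\
  (forall x, In x (fv (rbody r)) <-> In x (rparams r)) /\
  wf_arity (rbody r) /\ var_conv (rbody r).

Definition SID := list rule.
Definition wf_SID (D : SID) : Prop := Forall wf_rule D.

Variable U : Type.

Record arch := {
  acomp : CType S -> U -> Prop;
  aint  : IType S -> list U -> Prop
}.
Definition marking := State S -> U -> Prop.
Definition store := var -> U.

Definition upd (s : store) (x : var) (u : U) : store :=
  fun y => if Nat.eqb y x then u else s y.

Definition single_comp (a : arch) (m : marking) (C : CType S) (q : State S) (u : U) : Prop :=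
  (forall C' v, acomp a C' v <-> (C' = C /\ v = u)) /\
  (forall I t, ~ aint a I t) /\
  (forall q' v, m q' v <-> (q' = q /\ v = u)).

Inductive sat (D : SID) : arch -> marking -> store -> form -> Prop :=
| sat_emp : forall a m s,
    (forall C u, ~ acomp a C u) -> (forall I t, ~ aint a I t) ->
    (forall q u, ~ m q u) -> sat D a m s Emp
| sat_compA : forall a m s C x q,
    single_comp a m C q (s x) -> sat D a m s (CompA C x)
| sat_compQ : forall a m s C q x,
    single_comp a m C q (s x) -> sat D a m s (CompQ C q x)
| sat_inter : forall a m s I xs,
    (forall C u, ~ acomp a C u) ->
    (forall I' t, aint a I' t <-> (I' = I /\ t = map s xs)) ->
    (forall q u, ~ m q u) -> sat D a m s (Inter I xs)
| sat_pred : forall a m s A ys r s',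
    In r D -> rhead r = A ->
    Forall2 (fun x y => s' x = s y) (rparams r) ys ->
    sat D a m s' (rbody r) -> sat D a m s (PredA A ys)
| sat_sep : forall a m s f g a1 m1 a2 m2,
    sat D a1 m1 s f -> sat D a2 m2 s g ->
    (forall C u, acomp a1 C u -> acomp a2 C u -> False) ->
    (forall I t, aint a1 I t -> aint a2 I t -> False) ->
    (forall C u, acomp a C u <-> acomp a1 C u \/ acomp a2 C u) ->
    (forall I t, aint a I t <-> aint a1 I t \/ aint a2 I t) ->
    (forall q u, m q u <-> m1 q u \/ m2 q u) ->
    sat D a m s (Sep f g)
| sat_ex : forall a m s x f u,
    sat D a m (upd s x u) f -> sat D a m s (Ex x f).

Definition arch_tight (a : arch) : Prop :=
  forall I t, aint a I t ->
    forall k, k < iarity I ->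
      exists p u C, nth_error (iports I) k = Some p /\ nth_error t k = Some u /\
                    cports C p /\ acomp a C u.

Definition profile := PSym S -> list (CType S).
Definition wf_profile (lam : profile) : Prop :=
  forall A, length (lam A) = parity A.

Definition has_comp_atom (f : form) (C : CType S) (x : var) : Prop :=
  (exists q, atom_in (CompQ C q x) f) \/ atom_in (CompA C x) f.

Definition tight_form (lam : profile) (f : form) : Prop :=
  forall I xs, atom_in (Inter I xs) f ->
    forall j x p, nth_error xs j = Some x -> nth_error (iports I) j = Some p ->
      (exists C, has_comp_atom f C x /\ cports C p) \/
      (exists A ys l C, atom_in (PredA A ys) f /\ nth_error ys l = Some x /\
                        nth_error (lam A) l = Some C /\ cports C p).

Definition tight_SID_for (lam : profile) (D : SID) : Prop :=
  wf_profile lam /\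
  forall r, In r D ->
    tight_form lam (rbody r) /\
    forall j x C, nth_error (rparams r) j = Some x ->
                  nth_error (lam (rhead r)) j = Some C ->
      has_comp_atom (rbody r) C x \/
      (exists B ys l, atom_in (PredA B ys) (rbody r) /\ nth_error ys l = Some x /\
                      nth_error (lam B) l = Some C).

End CL.

From Stdlib Require Import List Arith Lia.
Set Implicit Arguments.
Unset Strict Implicit.

(* A derivation of [sat D a m s f] chooses a value for every bound variable of
   [f]; since the variable convention makes them pairwise distinct, these
   choices assemble into a single witness store.  Under that store every
   component atom denotes a component of [a], every argument of a predicate
   atom denotes a component of the type its profile prescribes, and every
   interaction of [a] is either the value of an interaction atom of [f] or
   already has all its ports attached to components.  Tightness of the SID is
   exactly what lets the profile invariant survive the unfolding of a predicate
   atom; tightness of the sentence then settles the interactions of its own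
   atoms. *)

Lemma Forall2_nth_error_r {A B : Type} (R : A -> B -> Prop) l1 l2 k y :
  Forall2 R l1 l2 -> nth_error l2 k = Some y ->
  exists x, nth_error l1 k = Some x /\ R x y.
Proof.
  intros H; revert k; induction H; intros [|k] E; simpl in *; try discriminate.
  - inversion E; subst; eauto.
  - auto.
Qed.

Lemma NoDup_app_disjoint {A : Type} (l1 l2 : list A) y :
  NoDup (l1 ++ l2) -> In y l1 -> In y l2 -> False.
Proof.
  induction l1 as [|x l1 IH]; simpl; intros N H1 H2; [contradiction|].
  inversion N as [|? ? Hx N']; subst.
  destruct H1 as [<-|H1]; [apply Hx, in_or_app; auto | eauto].
Qed.

Section Tightness.
Variables (S : Signature) (U : Type).
Implicit Types (f g : form S) (a : arch S U) (s : store U) (lam : profile S).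

Lemma in_fv_ex x f y : In y (fv f) -> y <> x -> In y (fv (Ex x f)).
Proof.
  intros Hy Hyx. apply filter_In. split; auto.
  apply Bool.negb_true_iff, Nat.eqb_neq; auto.
Qed.

Lemma atom_fv_in_fv_or_bv f atm y :
  atom_in atm f -> In y (fv atm) -> In y (fv f) \/ In y (bv f).
Proof.
  unfold atom_in; induction f as [| | | | |f1 IH1 f2 IH2|x f IH]; simpl; intros Ha Hy;
    try (destruct Ha as [<-|[]]; simpl in Hy; auto; fail).
  - apply in_app_or in Ha as [Ha|Ha];
      [destruct (IH1 Ha Hy) | destruct (IH2 Ha Hy)]; auto using in_or_app.
  - destruct (IH Ha Hy) as [H|H]; auto.
    destruct (Nat.eq_dec y x) as [->|Hyx]; [auto | left; apply in_fv_ex; auto].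
Qed.

Lemma var_conv_sep f g : var_conv (Sep f g) -> var_conv f /\ var_conv g.
Proof.
  unfold var_conv; simpl; intros [N H].
  split; split; eauto using NoDup_app_remove_r, NoDup_app_remove_l;
    intros x Hb Hf; apply (H x); apply in_or_app; auto.
Qed.

Lemma var_conv_ex x f : var_conv (Ex x f) -> var_conv f.
Proof.
  unfold var_conv; simpl; intros [N H]. inversion N; subst.
  split; auto. intros y Hb Hf.
  destruct (Nat.eq_dec y x) as [->|Hyx]; [auto|].
  apply (H y); [right; auto | apply in_fv_ex; auto].
Qed.

Lemma inter_atom_length f I xs :
  wf_arity f -> atom_in (Inter _ I xs) f -> length xs = iarity I.
Proof.
  unfold atom_in; induction f; simpl; intros W Ha;
    try (destruct Ha as [Ha|[]]; discriminate).
  - destruct Ha as [Ha|[]]; inversion Ha; subst; auto.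
  - destruct W; apply in_app_or in Ha as [Ha|Ha]; auto.
  - auto.
Qed.

Definition tight_tuple a (I : IType S) (t : list U) : Prop :=
  forall k, k < iarity I ->
    exists p u C, nth_error (iports I) k = Some p /\ nth_error t k = Some u /\
                  cports C p /\ acomp a C u.

Record witness lam a s f : Prop := Witness {
  witness_comp : forall C x, has_comp_atom f C x -> acomp a C (s x);
  witness_profile : forall A ys l y C, atom_in (PredA _ A ys) f ->
    nth_error ys l = Some y -> nth_error (lam A) l = Some C -> acomp a C (s y);
  witness_inter : forall I t, aint a I t ->
    (exists xs, atom_in (Inter _ I xs) f /\ t = map s xs) \/ tight_tuple a I t
}.

Lemma witness_inter_atom_tight lam a s f I xs :
  witness lam a s f -> wf_arity f -> tight_form lam f ->
  atom_in (Inter _ I xs) f -> tight_tuple a I (map s xs).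
Proof.
  intros [Hc Hp _] W T Ha k Hk.
  assert (L : length xs = iarity I) by (eapply inter_atom_length; eauto).
  destruct (nth_error (iports I) k) as [p|] eqn:Ep;
    [|apply nth_error_None in Ep; rewrite iports_len in Ep; lia].
  destruct (nth_error xs k) as [x|] eqn:Ex; [|apply nth_error_None in Ex; lia].
  exists p, (s x).
  destruct (T I xs Ha k x p Ex Ep) as [[C [H1 H2]]|[A [ys [l [C [H1 [H2 [H3 H4]]]]]]]];
    exists C; rewrite nth_error_map, Ex; eauto 6.
Qed.

Definition agree_on_atoms s s' f : Prop :=
  forall atm y, atom_in atm f -> In y (fv atm) -> s y = s' y.

Lemma witness_agree lam a s s' f :
  agree_on_atoms s s' f -> witness lam a s f -> witness lam a s' f.
Proof.
  intros Ag [Hc Hp Hi]; constructor.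
  - intros C x H. pose proof (Hc C x H) as Hx.
    destruct H as [[q H]|H]; rewrite <- (Ag _ x H); simpl; auto.
  - intros A ys l y C H1 H2 H3. rewrite <- (Ag _ y H1); eauto using nth_error_In.
  - intros I t Ht. destruct (Hi I t Ht) as [[xs [H1 ->]]|H]; [left|right; auto].
    exists xs; split; auto. apply map_ext_in. intros y Hy. apply (Ag _ y H1); auto.
Qed.

Lemma witness_union lam a a1 a2 s f g :
  (forall C u, acomp a C u <-> acomp a1 C u \/ acomp a2 C u) ->
  (forall I t, aint a I t <-> aint a1 I t \/ aint a2 I t) ->
  witness lam a1 s f -> witness lam a2 s g -> witness lam a s (Sep f g).
Proof.
  intros HC HI [C1 P1 I1] [C2 P2 I2].
  assert (M1 : forall C u, acomp a1 C u -> acomp a C u) by (intros; apply HC; auto).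
  assert (M2 : forall C u, acomp a2 C u -> acomp a C u) by (intros; apply HC; auto).
  assert (T : forall b I t, (forall C u, acomp b C u -> acomp a C u) ->
                tight_tuple b I t -> tight_tuple a I t).
  { intros b I t Hb H k Hk. destruct (H k Hk) as [p [u [C [? [? [? ?]]]]]].
    exists p, u, C; auto. }
  constructor; unfold has_comp_atom, atom_in in *; simpl.
  - intros C x [[q H]|H]; apply in_app_or in H as [H|H]; eauto.
  - intros A ys l y C H; apply in_app_or in H as [H|H]; eauto.
  - intros I t Ht. apply HI in Ht as [Ht|Ht].
    + destruct (I1 I t Ht) as [[xs [H1 H2]]|H]; eauto 6 using in_or_app.
    + destruct (I2 I t Ht) as [[xs [H1 H2]]|H]; eauto 6 using in_or_app.
Qed.

Lemma witness_ex lam a s x f : witness lam a s f -> witness lam a s (Ex x f).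
Proof. intros [Hc Hp Hi]; constructor; assumption. Qed.

Definition agree_outside (X : list var) s s' : Prop :=
  forall y, ~ In y X -> s' y = s y.

Lemma witness_sep lam a a1 a2 s s1 s2 f g :
  var_conv (Sep f g) ->
  agree_outside (bv f) s s1 -> agree_outside (bv g) s s2 ->
  (forall C u, acomp a C u <-> acomp a1 C u \/ acomp a2 C u) ->
  (forall I t, aint a I t <-> aint a1 I t \/ aint a2 I t) ->
  witness lam a1 s1 f -> witness lam a2 s2 g ->
  exists s', agree_outside (bv (Sep f g)) s s' /\ witness lam a s' (Sep f g).
Proof.
  intros [ND VB] E1 E2 HC HI W1 W2; simpl in ND, VB.
  set (s' := fun y => if in_dec Nat.eq_dec y (bv f) then s1 y else s2 y).
  exists s'; split.
  - intros y Hy. unfold s'. destruct (in_dec Nat.eq_dec y (bv f)).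
    + exfalso; apply Hy, in_or_app; auto.
    + apply E2. intros Hg; apply Hy, in_or_app; auto.
  - eapply witness_union; [exact HC | exact HI | |].
    + apply witness_agree with (s := s1); auto.
      intros atm y Ha Hy. unfold s'. destruct (in_dec Nat.eq_dec y (bv f)); auto.
      destruct (atom_fv_in_fv_or_bv Ha Hy) as [Hf|Hf]; [|contradiction].
      rewrite E1, E2; auto. intros Hg. apply (VB y); apply in_or_app; auto.
    + apply witness_agree with (s := s2); auto.
      intros atm y Ha Hy. unfold s'. destruct (in_dec Nat.eq_dec y (bv f)); auto.
      exfalso. destruct (atom_fv_in_fv_or_bv Ha Hy) as [Hf|Hf].
      * apply (VB y); apply in_or_app; auto.
      * eapply NoDup_app_disjoint; eauto.
Qed.

Lemma witness_pred lam D a s s' s1 r ys :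
  tight_SID_for lam D -> In r D -> wf_rule r ->
  Forall2 (fun x y => s' x = s y) (rparams r) ys ->
  agree_outside (bv (rbody r)) s' s1 ->
  witness lam a s1 (rbody r) -> witness lam a s (PredA _ (rhead r) ys).
Proof.
  intros TD Hr [_ [_ [Wfv [War Wvc]]]] Hys E [Hc Hp Hi].
  destruct (proj2 TD r Hr) as [Tb Tp].
  unfold has_comp_atom, atom_in; constructor; simpl.
  - intros C x [[q [Ha|[]]]|[Ha|[]]]; discriminate.
  - intros A ys' l y C [Ha|[]] E1 E2; inversion Ha; subst A ys'.
    destruct (Forall2_nth_error_r Hys E1) as [x [Ex <-]].
    rewrite <- E.
    + destruct (Tp l x C Ex E2) as [Hca|[B [zs [l' [H3 [H4 H5]]]]]]; eauto.
    + intros Hb. apply (proj2 Wvc x Hb), Wfv. eapply nth_error_In; eauto.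
  - intros I t Ht. right. destruct (Hi I t Ht) as [[xs [Ha ->]]|]; auto.
    eapply witness_inter_atom_tight; eauto. constructor; auto.
Qed.

Lemma sat_witness lam D a m s f :
  wf_SID D -> tight_SID_for lam D -> sat D a m s f -> var_conv f ->
  exists s', agree_outside (bv f) s s' /\ witness lam a s' f.
Proof.
  intros WD TD H. induction H as [a m s Hc Hi _ | a m s C x q [Hc [Hi _]]
    | a m s C q x [Hc [Hi _]] | a m s I xs Hc Hi _ | a m s A ys r s' Hr <- Hys _ IH
    | a m s f g a1 m1 a2 m2 _ IH1 _ IH2 _ _ HC HI _ | a m s x f u _ IH]; intros VC.
  1-3: exists s; split; [intros ? ?; auto|constructor];
       [ intros C' x' [[q' [Ha|[]]]|[Ha|[]]]; inversion Ha; subst; apply Hc; auto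
       | intros A ys l y C' [Ha|[]]; discriminate
       | intros I t Ht; exfalso; eapply Hi; eauto ].
  - exists s; split; [intros ? ?; auto|constructor].
    + intros C' x' [[q' [Ha|[]]]|[Ha|[]]]; discriminate.
    + intros A ys l y C' [Ha|[]]; discriminate.
    + intros I' t Ht. apply Hi in Ht as [-> ->]. left; exists xs; split; [left|]; auto.
  - assert (Wr : wf_rule r) by exact (proj1 (Forall_forall _ _) WD r Hr).
    pose proof Wr as (_ & _ & _ & _ & Wvc).
    destruct (IH Wvc) as [s1 [E W]].
    exists s; split; [intros ? ?; auto|]. eapply witness_pred; eauto.
  - destruct (var_conv_sep VC) as [V1 V2].
    destruct (IH1 V1) as [s1 [E1 W1]], (IH2 V2) as [s2 [E2 W2]].
    eapply witness_sep; eauto.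
  - destruct (IH (var_conv_ex VC)) as [s1 [E1 W1]].
    exists s1; split; [|exact (witness_ex x W1)]. intros y Hy. rewrite E1.
    + unfold upd. destruct (Nat.eqb_spec y x); subst; auto.
      exfalso; apply Hy; left; auto.
    + intros Hb; apply Hy; right; auto.
Qed.

End Tightness.

Theorem mainTheorem7 (S : Signature) (U : Type) (D : SID S)
  (lam : profile S) (phi : form S) :
  wf_SID D ->
  tight_SID_for lam D ->
  fv phi = nil -> wf_arity phi -> var_conv phi ->
  tight_form lam phi ->
  forall (a : arch S U) (m : marking S U) (s : store U),
    sat D a m s phi -> arch_tight a.
Proof.
  intros WD TD _ War VC Tphi a m s H I t Ht.
  destruct (sat_witness WD TD H VC) as [s' [_ W]].
  destruct (witness_inter W Ht) as [[xs [Ha ->]]|]; auto.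
  exact (witness_inter_atom_tight W War Tphi Ha).
Qed.
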